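(* A general binary quartic $p\in H_4(\mathbb{C}^2)$ can be written as $$p(x,y) = (t_1x^2+t_2xy+t_3y^2)^2 + (t_4x+t_5y)^4, \qquad t_i\in\mathbb{C},$$ in exactly six different ways. Moreover, the set of the six resulting ratios $t_5/t_4\in\mathbb{C}\cup\{\infty\}$ is the image of the set $\{0,\infty,1,-1,i,-i\}$ under a Möbius transformation.
   Context: $H_d(\mathbb{C}^n)$ denotes the complex vector space of homogeneous polynomials of degree $d$ in $n$ variables. ''A general $p$ has property P'' means P holds for all $p$ in a nonempty Zariski-open subset of $H_d(\mathbb{C}^n)$. Two representations are considered the same if they agree up to replacing the quadratic form by its negative and replacing the linear form $\ell$ by $\zeta\ell$ with $\zeta^4=1$. *)

From HB Require Import structures.
From mathcomp Require Import all_boot all_order all_algebra.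
Set Implicit Arguments. Unset Strict Implicit. Unset Printing Implicit Defensive.
Import Order.TTheory GRing.Theory Num.Theory.
Local Open Scope ring_scope.

(* A binary quartic p in H_4(C^2) is given by its 5 coefficients a : 'I_5 -> C:
   p(x,y) = sum_{i<5} a_i x^(4-i) y^i. *)
Definition qeval (C : numClosedFieldType) (a : 'I_5 -> C) (x y : C) : C :=
  \sum_(i < 5) a i * x ^+ (4 - i) * y ^+ i.

(* Polynomials in 5 variables (the coordinates a_0..a_4 of H_4(C^2)),
   as iterated univariate polynomials. *)
Definition poly5 (C : numClosedFieldType) :=
  {poly {poly {poly {poly {poly C}}}}}.

Definition eval5 (C : numClosedFieldType) (f : poly5 C) (a : 'I_5 -> C) : C :=
  ((((f.[(a (inord 4))%:P%:P%:P%:P]).[(a (inord 3))%:P%:P%:P]).[(a (inord 2))%:P%:P]).[(a (inord 1))%:P]).[a (inord 0)].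

(* "A general p has property P": P holds on a nonempty Zariski-open subset of
   H_4(C^2), i.e. on a basic open set {a | f(a) <> 0} for a nonzero polynomial f. *)
Definition general (C : numClosedFieldType) (P : ('I_5 -> C) -> Prop) : Prop :=
  exists f : poly5 C, f != 0 /\ forall a, eval5 f a != 0 -> P a.

(* t : 'I_5 -> C encodes (t_1,...,t_5) as (t 0, ..., t 4). *)
Definition represents (C : numClosedFieldType) (a t : 'I_5 -> C) : Prop :=
  forall x y : C,
    qeval a x y =
      (t (inord 0) * x ^+ 2 + t (inord 1) * x * y + t (inord 2) * y ^+ 2) ^+ 2
      + (t (inord 3) * x + t (inord 4) * y) ^+ 4.

Definition same_rep (C : numClosedFieldType) (t s : 'I_5 -> C) : Prop :=
  exists eps zeta : C, (eps = 1 \/ eps = -1) /\ zeta ^+ 4 = 1 /\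
    s (inord 0) = eps * t (inord 0) /\ s (inord 1) = eps * t (inord 1) /\ s (inord 2) = eps * t (inord 2) /\
    s (inord 3) = zeta * t (inord 3) /\ s (inord 4) = zeta * t (inord 4).

(* Points of P^1 = C u {oo} in homogeneous coordinates (u, v) <-> ratio v/u. *)
Definition proj_eq (C : numClosedFieldType) (P Q : C * C) : Prop :=
  P.1 * Q.2 = P.2 * Q.1.

Definition six_pts (C : numClosedFieldType) (j : 'I_6) : C * C :=
  match val j with
  | 0 => (1, 0)
  | 1 => (0, 1)
  | 2 => (1, 1)
  | 3 => (1, -1)
  | 4 => (1, 'i)
  | _ => (1, - 'i)
  end.

Definition mob_act (C : numClosedFieldType) (M : 'M[C]_2) (P : C * C) : C * C :=
  (M 0 0 * P.1 + M 0 1 * P.2, M 1 0 * P.1 + M 1 1 * P.2).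

(* Write p = a0 (x - r1 y)(x - r2 y)(x - r3 y)(x - r4 y) with distinct roots.
   Since q^2 + l^4 = (q + i l^2)(q - i l^2), a representation amounts to a
   splitting of the four roots into two pairs {r1,r2} | {r3,r4} together with a
   factorization p = U V, U and V having these roots, such that U - V = 2 i l^2
   is a square.  Writing l = s (x + tau y), this happens exactly when tau is a
   root of the "pairing quadratic" F(tau) = D tau^2 + 2 E tau + G of the pairing;
   each root tau gives one representation up to the trivial symmetries.  Three
   pairings with two roots each give the six representations.  The root pairs of
   the three pairing quadratics are mutually harmonic, which makes the six ratios
   the image of {0, oo, 1, -1, i, -i} under a Moebius transformation.
   Genericity is the non-vanishing of a0, of the discriminant 4 I^3 - J^2 and of
   the product of the three leading coefficients D, all polynomial in p. *)

From HB Require Import structures.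
From mathcomp Require Import all_boot all_order all_algebra.
From mathcomp Require Import ring.
Import Order.TTheory GRing.Theory Num.Theory.
Local Open Scope ring_scope.

(* The classical invariants I, J of the binary quartic a x^4 + b x^3 y + ... + e y^4,
   and the polynomial R = a^3 D_A D_B D_C vanishing when one of the three pairings
   of the roots has D = 0 (see [invR_roots]). *)
Definition invI {R : comPzRingType} (a b c d e : R) : R := 12*a*e - 3*b*d + c^+2.
Definition invJ {R : comPzRingType} (a b c d e : R) : R :=
  72*a*c*e + 9*b*c*d - 27*a*d^+2 - 27*e*b^+2 - 2*c^+3.
Definition invR {R : comPzRingType} (a b c d : R) : R :=
  - b ^+ 3 + 4 * a * b * c - 8 * a ^+ 2 * d.

Definition genericity {R : comPzRingType} (a b c d e : R) : R :=
  a * (4 * invI a b c d e ^+ 3 - invJ a b c d e ^+ 2) * invR a b c d.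

Lemma rmorph_genericity (R S : comNzRingType) (phi : {rmorphism R -> S}) a b c d e :
  phi (genericity a b c d e) = genericity (phi a) (phi b) (phi c) (phi d) (phi e).
Proof.
by rewrite /genericity /invI /invJ /invR
  !(rmorph_nat, rmorphM, rmorphB, rmorphD, rmorphN, rmorphXn).
Qed.

Lemma det2 (R : comNzRingType) (M : 'M[R]_2) : \det M = M 0 0 * M 1 1 - M 0 1 * M 1 0.
Proof.
rewrite (expand_det_row _ 0) !big_ord_recl big_ord0 addr0 /cofactor !det_mx11 !mxE /=.
have l0 : lift (0 : 'I_2) (0 : 'I_1) = 1 by apply/val_inj.
have l1 : lift (1 : 'I_2) (0 : 'I_1) = 0 by apply/val_inj.
have o0 : (ord0 : 'I_2) = 0 by apply/val_inj.
rewrite ?o0 ?l0 ?l1 /= ?expr0 ?expr1; ring.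
Qed.

Set Implicit Arguments.
Unset Strict Implicit.

Section BinaryQuartics.
Variable C : numClosedFieldType.

Local Notation "t '@@' k" := (t (@inord 4 k)) (at level 8, k at level 0, format "t @@ k").

Lemma two_neq0 : (2 : C) != 0. Proof. by rewrite pnatr_eq0. Qed.

Local Ltac nonzero := rewrite ?two_neq0 ?neq0Ci ?andbT ?andTb; try done;
  repeat (apply/andP; split); try done.

Definition mk5 (t0 t1 t2 t3 t4 : C) : 'I_5 -> C :=
  fun i => nth 0 [:: t0; t1; t2; t3; t4] i.

Lemma mk5E t0 t1 t2 t3 t4 :
  [/\ (mk5 t0 t1 t2 t3 t4)@@0 = t0, (mk5 t0 t1 t2 t3 t4)@@1 = t1,
      (mk5 t0 t1 t2 t3 t4)@@2 = t2, (mk5 t0 t1 t2 t3 t4)@@3 = t3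
    & (mk5 t0 t1 t2 t3 t4)@@4 = t4].
Proof. by rewrite /mk5 !inordK. Qed.

Lemma qevalE (a : 'I_5 -> C) (x y : C) : qeval a x y =
  a@@0 * x ^+ 4 + a@@1 * x ^+ 3 * y + a@@2 * x ^+ 2 * y ^+ 2 + a@@3 * x * y ^+ 3 + a@@4 * y ^+ 4.
Proof.
rewrite /qeval (eq_bigr (fun i : 'I_5 => a (inord i) * x ^+ (4 - i) * y ^+ i)).
  by rewrite !big_ord_recl big_ord0 /=; ring.
by move=> i _; rewrite inord_val.
Qed.

(* A quartic polynomial function vanishing identically has zero coefficients
   (evaluate at 0, +-1, +-2). *)
Lemma quartic_fun_eq0 (c0 c1 c2 c3 c4 : C) :
  (forall z : C, c0 * z ^+ 4 + c1 * z ^+ 3 + c2 * z ^+ 2 + c3 * z + c4 = 0) ->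
  [/\ c0 = 0, c1 = 0, c2 = 0, c3 = 0 & c4 = 0].
Proof.
move=> H.
have h0 := H 0; have h1 := H 1; have h2 := H (-1); have h3 := H 2; have h4 := H (-2).
have e4 : c4 = 0 by rewrite -h0; ring.
have half (u : C) : 2 * u = 0 -> u = 0.
  by move/eqP; rewrite mulf_eq0 (negbTE two_neq0) => /eqP.
have e02 : c0 + c2 = 0 by apply: half; rewrite -[RHS](addr0 0) -{1}h1 -h2 e4; ring.
have e13 : c1 + c3 = 0 by apply: half; rewrite -[RHS](subr0 0) -{1}h1 -h2 e4; ring.
have e0 : 24 * c0 = 0.
  by rewrite -[RHS](addr0 0) -{1}h3 -h4 e4 -[c2](addKr c0) e02; ring.
have e1 : 12 * c1 = 0.
  by rewrite -[RHS](subr0 0) -{1}h3 -h4 e4 -[c3](addKr c1) e13; ring.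
have c0z : c0 = 0 by move/eqP: e0; rewrite mulf_eq0 pnatr_eq0 /= => /eqP.
have c1z : c1 = 0 by move/eqP: e1; rewrite mulf_eq0 pnatr_eq0 /= => /eqP.
split => //.
- by rewrite -[c2](addKr c0) e02 c0z; ring.
- by rewrite -[c3](addKr c1) e13 c1z; ring.
Qed.

Lemma monic_quartic_split (c1 c2 c3 c4 : C) : exists r1 r2 r3 r4 : C, forall z : C,
  z ^+ 4 + c1 * z ^+ 3 + c2 * z ^+ 2 + c3 * z + c4 = (z - r1) * (z - r2) * (z - r3) * (z - r4).
Proof.
pose p := Poly [:: c4; c3; c2; c1; 1].
have sp : p = [:: c4; c3; c2; c1; 1] :> seq C by apply: (@PolyK _ 0); rewrite /= oner_neq0.
have [rs Hp] := closed_field_poly_normal p.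
rewrite lead_coefE sp scale1r /= in Hp.
have size_rs : size rs = 4%N.
  by have := congr1 (fun q : {poly C} => size q) Hp; rewrite /= sp size_prod_XsubC => -[].
case: rs Hp size_rs => [|r1 [|r2 [|r3 [|r4 [|? ?]]]]] // Hp _.
exists r1, r2, r3, r4 => z.
have := congr1 (fun q => q.[z]) Hp.
change (Poly _) with
  (cons_poly c4 (cons_poly c3 (cons_poly c2 (cons_poly c1 (cons_poly 1 0))))).
rewrite !horner_cons horner0 !big_cons big_nil mulr1 !hornerM !hornerD !hornerN !hornerX !hornerC.
by rewrite !mulrA => <-; ring.
Qed.

Lemma represents_coef (a t : 'I_5 -> C) : represents a t ->
  [/\ a@@0 = t@@0 ^+ 2 + t@@3 ^+ 4,
      a@@1 = 2 * t@@0 * t@@1 + 4 * t@@3 ^+ 3 * t@@4,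
      a@@2 = t@@1 ^+ 2 + 2 * t@@0 * t@@2 + 6 * t@@3 ^+ 2 * t@@4 ^+ 2,
      a@@3 = 2 * t@@1 * t@@2 + 4 * t@@3 * t@@4 ^+ 3
    & a@@4 = t@@2 ^+ 2 + t@@4 ^+ 4].
Proof.
move=> H.
have [] := @quartic_fun_eq0 (a@@0 - (t@@0 ^+ 2 + t@@3 ^+ 4))
  (a@@1 - (2 * t@@0 * t@@1 + 4 * t@@3 ^+ 3 * t@@4))
  (a@@2 - (t@@1 ^+ 2 + 2 * t@@0 * t@@2 + 6 * t@@3 ^+ 2 * t@@4 ^+ 2))
  (a@@3 - (2 * t@@1 * t@@2 + 4 * t@@3 * t@@4 ^+ 3))
  (a@@4 - (t@@2 ^+ 2 + t@@4 ^+ 4)).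
  move=> z; apply/eqP; rewrite -subr_eq0 -(subrr (qeval a z 1)) {2}H qevalE; apply/eqP; ring.
by move=> /subr0_eq h0 /subr0_eq h1 /subr0_eq h2 /subr0_eq h3 /subr0_eq h4.
Qed.

(* The pairing {r1, r2} | {r3, r4} of four roots and its quadratic
   F(tau) = D tau^2 + 2 E tau + G: x + tau y is a double root of some combination
   alpha (x - r1 y)(x - r2 y) - beta (x - r3 y)(x - r4 y) exactly when F(tau) = 0. *)
Definition pairD (r1 r2 r3 r4 : C) := (r1 + r2) - (r3 + r4).
Definition pairE (r1 r2 r3 r4 : C) := r1 * r2 - r3 * r4.
Definition pairG (r1 r2 r3 r4 : C) := (r3 + r4) * (r1 * r2) - (r1 + r2) * (r3 * r4).
Definition pairF (r1 r2 r3 r4 tau : C) :=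
  pairD r1 r2 r3 r4 * tau ^+ 2 + 2 * pairE r1 r2 r3 r4 * tau + pairG r1 r2 r3 r4.

Lemma pairF_disc r1 r2 r3 r4 :
  pairE r1 r2 r3 r4 ^+ 2 - pairD r1 r2 r3 r4 * pairG r1 r2 r3 r4 =
  (r1 - r3) * (r1 - r4) * (r2 - r3) * (r2 - r4).
Proof. rewrite /pairE /pairD /pairG; ring. Qed.

(* Values of F at minus the roots; they show that F(tau) = 0 forces -tau not to be a root. *)
Lemma pairF_at_roots r1 r2 r3 r4 :
  [/\ pairF r1 r2 r3 r4 (- r1) = (r1 - r2) * (r1 - r3) * (r1 - r4),
      pairF r1 r2 r3 r4 (- r2) = (r2 - r1) * (r2 - r3) * (r2 - r4),
      pairF r1 r2 r3 r4 (- r3) = - ((r3 - r1) * (r3 - r2) * (r3 - r4))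
    & pairF r1 r2 r3 r4 (- r4) = - ((r4 - r1) * (r4 - r2) * (r4 - r3))].
Proof. rewrite /pairF /pairE /pairD /pairG; split; ring. Qed.

Lemma pairF_swap r1 r2 r3 r4 tau : pairF r3 r4 r1 r2 tau = - pairF r1 r2 r3 r4 tau.
Proof. rewrite /pairF /pairE /pairD /pairG; ring. Qed.

Definition tau1 r1 r2 r3 r4 := (- pairE r1 r2 r3 r4 +
  sqrtC (pairE r1 r2 r3 r4 ^+ 2 - pairD r1 r2 r3 r4 * pairG r1 r2 r3 r4)) / pairD r1 r2 r3 r4.
Definition tau2 r1 r2 r3 r4 := (- pairE r1 r2 r3 r4 -
  sqrtC (pairE r1 r2 r3 r4 ^+ 2 - pairD r1 r2 r3 r4 * pairG r1 r2 r3 r4)) / pairD r1 r2 r3 r4.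

Lemma pairF_factor r1 r2 r3 r4 tau : pairD r1 r2 r3 r4 != 0 ->
  pairF r1 r2 r3 r4 tau =
  pairD r1 r2 r3 r4 * (tau - tau1 r1 r2 r3 r4) * (tau - tau2 r1 r2 r3 r4).
Proof.
rewrite /pairF /tau1 /tau2.
set D := pairD _ _ _ _; set E := pairE _ _ _ _; set G := pairG _ _ _ _ => nzD.
set d := sqrtC _.
have hd : d ^+ 2 = E ^+ 2 - D * G by rewrite sqrtCK.
have -> : D * (tau - (- E + d) / D) * (tau - (- E - d) / D) =
   D * tau ^+ 2 + 2 * E * tau + (E ^+ 2 - d ^+ 2) / D by field.
by rewrite hd; field.
Qed.

Lemma pairF_roots r1 r2 r3 r4 : pairD r1 r2 r3 r4 != 0 ->
  (r1 - r3) * (r1 - r4) * (r2 - r3) * (r2 - r4) != 0 ->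
  [/\ pairF r1 r2 r3 r4 (tau1 r1 r2 r3 r4) = 0, pairF r1 r2 r3 r4 (tau2 r1 r2 r3 r4) = 0,
      tau1 r1 r2 r3 r4 != tau2 r1 r2 r3 r4,
      pairD r1 r2 r3 r4 * (tau1 r1 r2 r3 r4 + tau2 r1 r2 r3 r4) = - (2 * pairE r1 r2 r3 r4)
    & pairD r1 r2 r3 r4 * (tau1 r1 r2 r3 r4 * tau2 r1 r2 r3 r4) = pairG r1 r2 r3 r4].
Proof.
move=> nzD nzd.
rewrite !(pairF_factor _ nzD) !subrr !mulr0 mul0r /tau1 /tau2.
set D := pairD _ _ _ _; set E := pairE _ _ _ _; set G := pairG _ _ _ _.
rewrite -pairF_disc -/D -/E -/G in nzd.
set d := sqrtC _.
have hd : d ^+ 2 = E ^+ 2 - D * G by rewrite sqrtCK.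
have nzd' : d != 0 by apply: contra nzd => /eqP d0; rewrite -hd d0 expr0n.
split => //.
- apply: contra nzd' => /eqP e.
  have : (- E + d) / D * D = (- E - d) / D * D by rewrite e.
  rewrite !divfK // => /eqP; rewrite -subr_eq0.
  have -> : - E + d - (- E - d) = 2 * d by ring.
  by rewrite mulf_eq0 (negbTE two_neq0).
- by field.
- have -> : D * ((- E + d) / D * ((- E - d) / D)) = (E ^+ 2 - d ^+ 2) / D by field.
  by rewrite hd; field.
Qed.

Lemma square_plus_fourth (a0 lam al be D P Q L s4 : C) :
  al != 0 -> be != 0 -> lam != 0 -> D != 0 ->
  lam ^+ 2 = a0 * al / be -> s4 = - (a0 * D) ^+ 2 / (4 * lam ^+ 2 * be ^+ 2) ->
  D * L ^+ 2 = al * P - be * Q ->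
  ((lam * P + a0 * Q / lam) / 2) ^+ 2 + s4 * L ^+ 4 = a0 * P * Q.
Proof.
move=> nal nbe nlam nD hl -> hDL.
have a0e : a0 = lam ^+ 2 * be / al by rewrite hl; field; nonzero.
have L4 : L ^+ 4 = (D * L ^+ 2) ^+ 2 / D ^+ 2 by field; nonzero.
by rewrite L4 hDL a0e; field; nonzero.
Qed.

Lemma fourth_power_scale (s a0 D l be : C) : l != 0 -> be != 0 ->
  s ^+ 2 = a0 * D / (2 * 'i * l * be) -> s ^+ 4 = - (a0 * D) ^+ 2 / (4 * l ^+ 2 * be ^+ 2).
Proof.
move=> nl nbe hs.
rewrite (exprM s 2 2) hs.
have -> : (a0 * D / (2 * 'i * l * be)) ^+ 2 = (a0 * D) ^+ 2 / (4 * 'i ^+ 2 * l ^+ 2 * be ^+ 2).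
  by field; nonzero.
by rewrite sqrCi; field; nonzero.
Qed.

(* The representation attached to the pairing {r1,r2} | {r3,r4} and a root tau of
   its quadratic: q = (lambda P + a0 Q / lambda) / 2 and l = s (x + tau y). *)
Definition pair_alpha (r3 r4 tau : C) := - (2 * tau + (r3 + r4)).
Definition pair_beta (r1 r2 tau : C) := - (2 * tau + (r1 + r2)).
Definition pair_lambda (a0 r1 r2 r3 r4 tau : C) :=
  sqrtC (a0 * pair_alpha r3 r4 tau / pair_beta r1 r2 tau).
Definition pair_scale (a0 r1 r2 r3 r4 tau : C) :=
  sqrtC (a0 * pairD r1 r2 r3 r4 / (2 * 'i * pair_lambda a0 r1 r2 r3 r4 tau * pair_beta r1 r2 tau)).
Definition pair_rep (a0 r1 r2 r3 r4 tau : C) : 'I_5 -> C :=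
  let l := pair_lambda a0 r1 r2 r3 r4 tau in let s := pair_scale a0 r1 r2 r3 r4 tau in
  mk5 ((l + a0 / l) / 2) (- (l * (r1 + r2) + a0 * (r3 + r4) / l) / 2)
      ((l * (r1 * r2) + a0 * (r3 * r4) / l) / 2) s (s * tau).

(* A multiplier vanishes only if the pair it multiplies has a double root. *)
Lemma pair_multiplier_neq0 r1 r2 r3 r4 tau : pairD r1 r2 r3 r4 != 0 -> r3 != r4 ->
  pairF r1 r2 r3 r4 tau = 0 -> pair_alpha r3 r4 tau != 0.
Proof.
move=> nD n34 hF; apply: contraNneq n34 => h; apply/eqP/subr0_eq/eqP.
have : 4 * pairF r1 r2 r3 r4 tau = pairD r1 r2 r3 r4 * (r3 - r4) ^+ 2 -
    2 * pair_alpha r3 r4 tau * (pairD r1 r2 r3 r4 * (tau - (r3 + r4) / 2) + 2 * pairE r1 r2 r3 r4).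
  by rewrite /pairF /pair_alpha /pairD /pairE /pairG; field; nonzero.
rewrite hF h !mulr0 !mul0r subr0 => /esym/eqP.
by rewrite mulf_eq0 (negbTE nD) expf_eq0.
Qed.

Lemma pair_rep_spec a0 r1 r2 r3 r4 tau : a0 != 0 -> pairD r1 r2 r3 r4 != 0 ->
  r1 != r2 -> r3 != r4 -> pairF r1 r2 r3 r4 tau = 0 ->
  let t := pair_rep a0 r1 r2 r3 r4 tau in
  [/\ forall x y : C,
      (t@@0 * x ^+ 2 + t@@1 * x * y + t@@2 * y ^+ 2) ^+ 2 + (t@@3 * x + t@@4 * y) ^+ 4 =
      a0 * (x - r1 * y) * (x - r2 * y) * (x - r3 * y) * (x - r4 * y),
      t@@3 != 0 & t@@4 = tau * t@@3].
Proof.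
move=> na0 nD n12 n34 hF t; rewrite /t /pair_rep /=.
have [-> -> -> -> ->] := mk5E
  ((pair_lambda a0 r1 r2 r3 r4 tau + a0 / pair_lambda a0 r1 r2 r3 r4 tau) / 2)
  (- (pair_lambda a0 r1 r2 r3 r4 tau * (r1 + r2) +
      a0 * (r3 + r4) / pair_lambda a0 r1 r2 r3 r4 tau) / 2)
  ((pair_lambda a0 r1 r2 r3 r4 tau * (r1 * r2) +
      a0 * (r3 * r4) / pair_lambda a0 r1 r2 r3 r4 tau) / 2)
  (pair_scale a0 r1 r2 r3 r4 tau) (pair_scale a0 r1 r2 r3 r4 tau * tau).
set l := pair_lambda _ _ _ _ _ _; set s := pair_scale _ _ _ _ _ _.
set al := pair_alpha r3 r4 tau; set be := pair_beta r1 r2 tau; set D := pairD r1 r2 r3 r4.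
have nal : al != 0 by apply: pair_multiplier_neq0 hF.
have nbe : be != 0.
  have hF' : pairF r3 r4 r1 r2 tau = 0 by rewrite pairF_swap hF oppr0.
  have nD' : pairD r3 r4 r1 r2 != 0 by rewrite /pairD -opprB oppr_eq0.
  exact: pair_multiplier_neq0 nD' n12 hF'.
have hl : l ^+ 2 = a0 * al / be by rewrite sqrtCK.
have nl : l != 0.
  apply: contra_eq_neq hl => ->.
  by rewrite expr0n eq_sym !mulf_neq0 // invr_eq0.
have hs : s ^+ 2 = a0 * D / (2 * 'i * l * be) by rewrite sqrtCK.
have ns : s != 0.
  apply: contra_eq_neq hs => ->.
  by rewrite expr0n eq_sym !mulf_neq0 // ?invr_eq0 ?mulf_neq0 ?two_neq0 ?neq0Ci.
split => [x y||]; last by rewrite mulrC.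
- have -> : (s * x + s * tau * y) ^+ 4 = s ^+ 4 * (x + tau * y) ^+ 4 by ring.
  have -> : (l + a0 / l) / 2 * x ^+ 2 + - (l * (r1 + r2) + a0 * (r3 + r4) / l) / 2 * x * y +
      (l * (r1 * r2) + a0 * (r3 * r4) / l) / 2 * y ^+ 2 =
    (l * (x ^+ 2 - (r1 + r2) * x * y + r1 * r2 * y ^+ 2) +
     a0 * (x ^+ 2 - (r3 + r4) * x * y + r3 * r4 * y ^+ 2) / l) / 2 by field.
  rewrite (square_plus_fourth nal nbe nl nD hl (fourth_power_scale nl nbe hs)); first ring.
  apply/eqP; rewrite eq_sym -subr_eq0; apply/eqP.
  have -> : al * (x ^+ 2 - (r1 + r2) * x * y + r1 * r2 * y ^+ 2) -
       be * (x ^+ 2 - (r3 + r4) * x * y + r3 * r4 * y ^+ 2) - D * (x + tau * y) ^+ 2 =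
       - pairF r1 r2 r3 r4 tau * y ^+ 2.
    by rewrite /al /be /pair_alpha /pair_beta /D /pairF /pairD /pairE /pairG; ring.
  by rewrite hF oppr0 mul0r.
- done.
Qed.

Definition quad (u0 u1 u2 z : C) := u0 * z ^+ 2 + u1 * z + u2.

(* A quadratic is determined, up to a sign e, by its value (when nonzero), its
   first derivative and its second derivative at one point, given through the
   values of g g' and g'^2 + g g'' (the jets of g^2). *)
Lemma quad_from_jets (e x0 t0 t1 t2 u0 u1 u2 : C) : e ^+ 2 = 1 ->
  quad t0 t1 t2 x0 != 0 -> quad u0 u1 u2 x0 = e * quad t0 t1 t2 x0 ->
  quad t0 t1 t2 x0 * (2 * t0 * x0 + t1) = quad u0 u1 u2 x0 * (2 * u0 * x0 + u1) ->
  (2 * t0 * x0 + t1) ^+ 2 + 2 * t0 * quad t0 t1 t2 x0 =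
    (2 * u0 * x0 + u1) ^+ 2 + 2 * u0 * quad u0 u1 u2 x0 ->
  [/\ u0 = e * t0, u1 = e * t1 & u2 = e * t2].
Proof.
set g := quad t0 t1 t2 x0; set h := quad u0 u1 u2 x0.
set g1 := 2 * t0 * x0 + t1; set h1 := 2 * u0 * x0 + u1.
move=> e2 nz hh hg1 hg2; rewrite hh in hg1 hg2.
have eg1 : g1 = e * h1 by apply: (mulfI nz); rewrite hg1; ring.
have eh1 : h1 = e * g1 by rewrite eg1 mulrA -expr2 e2 mul1r.
rewrite eh1 in hg2.
have nz2 : 2 * g != 0 by rewrite mulf_neq0 // two_neq0.
have t0e : t0 = u0 * e.
  apply: (mulfI nz2).
  have -> : 2 * g * t0 = (g1 ^+ 2 + 2 * t0 * g) - g1 ^+ 2 by ring.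
  by rewrite hg2 exprMn e2; ring.
have u0e : u0 = e * t0 by rewrite t0e mulrCA -expr2 e2 mulr1.
have u1e : u1 = e * t1.
  have -> : u1 = h1 - 2 * u0 * x0 by rewrite /h1; ring.
  by rewrite eh1 u0e /g1; ring.
split => //.
have -> : u2 = h - u0 * x0 ^+ 2 - u1 * x0 by rewrite /h /quad; ring.
by rewrite hh u0e u1e /g /quad; ring.
Qed.

(* At that point l vanishes, so p = q^2 to second order there. *)
Lemma rep_unique (a t t' : 'I_5 -> C) tau : represents a t -> represents a t' ->
  t@@3 != 0 -> t@@4 = tau * t@@3 -> t'@@4 = tau * t'@@3 -> qeval a (- tau) 1 != 0 ->
  same_rep t t'.
Proof.
move=> Ht Ht' nz3 h4 h4' nzp.
have [e0 e1 e2 e3 e4] := represents_coef Ht.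
have [f0 f1 f2 f3 f4] := represents_coef Ht'.
set x0 := - tau.
have jet0 (s : 'I_5 -> C) : s@@4 = tau * s@@3 -> represents a s ->
  [/\ qeval a x0 1 = quad s@@0 s@@1 s@@2 x0 ^+ 2,
      4 * a@@0 * x0 ^+ 3 + 3 * a@@1 * x0 ^+ 2 + 2 * a@@2 * x0 + a@@3 =
        2 * (quad s@@0 s@@1 s@@2 x0 * (2 * s@@0 * x0 + s@@1))
    & 6 * a@@0 * x0 ^+ 2 + 3 * a@@1 * x0 + a@@2 =
        (2 * s@@0 * x0 + s@@1) ^+ 2 + 2 * s@@0 * quad s@@0 s@@1 s@@2 x0].
  move=> hs4 Hs; rewrite qevalE; have [-> -> -> -> ->] := represents_coef Hs.
  by rewrite hs4 /x0 /quad; split; ring.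
have [P1 P2 P3] := jet0 t h4 Ht; have [P1' P2' P3'] := jet0 t' h4' Ht'.
have nzG : quad t@@0 t@@1 t@@2 x0 != 0.
  by apply: contra nzp; rewrite P1 => /eqP ->; rewrite expr0n.
have [e [ee2 hG]] : exists e : C, e ^+ 2 = 1 /\
    quad t'@@0 t'@@1 t'@@2 x0 = e * quad t@@0 t@@1 t@@2 x0.
  move: (etrans (esym P1) P1') => /eqP; rewrite eqf_sqr => /orP[] /eqP ->.
    by exists 1; rewrite expr1n mul1r.
  by exists (-1); rewrite sqrrN expr1n mulN1r opprK.
have [u0 u1 u2] := quad_from_jets ee2 nzG hG
  (mulfI two_neq0 (etrans (esym P2) P2')) (etrans (esym P3) P3').
have h34 : t'@@3 ^+ 4 = t@@3 ^+ 4.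
  have : t@@0 ^+ 2 + t@@3 ^+ 4 = t'@@0 ^+ 2 + t'@@3 ^+ 4 by rewrite -e0 -f0.
  by rewrite u0 exprMn ee2 mul1r => /addrI ->.
exists e, (t'@@3 / t@@3); do !split.
- by move: ee2 => /eqP; rewrite sqrf_eq1 => /orP[] /eqP ->; [left|right].
- by rewrite expr_div_n h34 divff // expf_neq0.
- by [].
- by [].
- by [].
- by rewrite divfK.
- by rewrite h4' h4; field.
Qed.

Lemma quad_vieta (u0 u1 u2 x y : C) : x != y ->
  quad u0 u1 u2 x = 0 -> quad u0 u1 u2 y = 0 -> u1 = - (u0 * (x + y)) /\ u2 = u0 * (x * y).
Proof.
rewrite /quad => nxy hx hy.
have h : (x - y) * (u0 * (x + y) + u1) = 0 by rewrite -[RHS](subrr 0) -{1}hx -hy; ring.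
move/eqP: h; rewrite mulf_eq0 subr_eq0 (negbTE nxy) /= addrC addr_eq0 => /eqP h1.
split => //.
have -> : u2 = (u0 * x ^+ 2 + u1 * x + u2) - u0 * x ^+ 2 - u1 * x by ring.
by rewrite hx h1; ring.
Qed.

Lemma quad_three_roots (u0 u1 u2 x y z : C) : u0 != 0 ->
  quad u0 u1 u2 x = 0 -> quad u0 u1 u2 y = 0 -> quad u0 u1 u2 z = 0 ->
  x != y -> x != z -> y != z -> False.
Proof.
move=> nu hx hy hz nxy nxz nyz.
have [h1 h2] := quad_vieta nxy hx hy.
move: hz; rewrite /quad h1 h2.
have -> : u0 * z ^+ 2 + - (u0 * (x + y)) * z + u0 * (x * y) = u0 * (z - x) * (z - y) by ring.
move/eqP; rewrite !mulf_eq0 (negbTE nu) !subr_eq0 /= => /orP[] /eqP e.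
  by move: nxz; rewrite e eqxx.
by move: nyz; rewrite e eqxx.
Qed.

Lemma two_two_split (P Q : pred C) (r1 r2 r3 r4 : C) :
  (forall x y z, P x -> P y -> P z -> x != y -> x != z -> y != z -> False) ->
  (forall x y z, Q x -> Q y -> Q z -> x != y -> x != z -> y != z -> False) ->
  r1 != r2 -> r1 != r3 -> r1 != r4 -> r2 != r3 -> r2 != r4 -> r3 != r4 ->
  P r1 || Q r1 -> P r2 || Q r2 -> P r3 || Q r3 -> P r4 || Q r4 ->
  [\/ [&& P r1, P r2, Q r3 & Q r4] || [&& P r3, P r4, Q r1 & Q r2],
      [&& P r1, P r3, Q r2 & Q r4] || [&& P r2, P r4, Q r1 & Q r3]
    | [&& P r1, P r4, Q r2 & Q r3] || [&& P r2, P r3, Q r1 & Q r4]].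
Proof.
move=> hP hQ n12 n13 n14 n23 n24 n34.
case/orP=> h1; case/orP=> h2; case/orP=> h3; case/orP=> h4; rewrite ?h1 ?h2 ?h3 ?h4 /=;
  first [ by apply: Or31; rewrite ?orbT | by apply: Or32; rewrite ?orbT
        | by apply: Or33; rewrite ?orbT | exfalso ];
  first [ exact: hP h1 h2 h3 n12 n13 n23 | exact: hP h1 h2 h4 n12 n14 n24
        | exact: hP h1 h3 h4 n13 n14 n34 | exact: hP h2 h3 h4 n23 n24 n34
        | exact: hQ h1 h2 h3 n12 n13 n23 | exact: hQ h1 h2 h4 n12 n14 n24
        | exact: hQ h1 h3 h4 n13 n14 n34 | exact: hQ h2 h3 h4 n23 n24 n34 ].
Qed.

(* If q^2 + l^4 = U V with U - V = 2 i l^2 (l = t3 x + t4 y), U vanishing on r1, r2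
   and V on r3, r4 (or the other way round), then t3 != 0 and t4 / t3 is a root of
   the pairing quadratic: writing U, V with Vieta, 2 i times the homogenised F(t3, t4)
   is D (u2 - v2) + E (u1 - v1) + G (u0 - v0) = 0. *)
Lemma pairing_ratio (r1 r2 r3 r4 u0 u1 u2 v0 v1 v2 t3 t4 : C) :
  pairD r1 r2 r3 r4 != 0 -> r1 != r2 -> r3 != r4 -> u0 * v0 != 0 ->
  u0 - v0 = 2 * 'i * t3 ^+ 2 -> u1 - v1 = 4 * 'i * t3 * t4 -> u2 - v2 = 2 * 'i * t4 ^+ 2 ->
  [&& quad u0 u1 u2 r1 == 0, quad u0 u1 u2 r2 == 0, quad v0 v1 v2 r3 == 0
    & quad v0 v1 v2 r4 == 0] ->
  t3 != 0 /\ pairF r1 r2 r3 r4 (t4 / t3) = 0.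
Proof.
move=> nD n12 n34 nuv d0 d1 d2 /and4P[/eqP hu1 /eqP hu2 /eqP hv3 /eqP hv4].
have [eu1 eu2] := quad_vieta n12 hu1 hu2.
have [ev1 ev2] := quad_vieta n34 hv3 hv4.
have nt3 : t3 != 0.
  apply/eqP => t30; move: d0 d1; rewrite t30 expr0n !mulr0 !mul0r => /subr0_eq e0.
  rewrite eu1 ev1 e0 => /eqP.
  have -> : - (v0 * (r1 + r2)) - - (v0 * (r3 + r4)) = - (v0 * pairD r1 r2 r3 r4).
    by rewrite /pairD; ring.
  rewrite oppr_eq0 mulf_eq0 (negbTE nD) orbF => /eqP v00.
  by move: nuv; rewrite v00 mulr0 eqxx.
split => //.
have H : 2 * 'i * (pairD r1 r2 r3 r4 * t4 ^+ 2 + 2 * pairE r1 r2 r3 r4 * t3 * t4 +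
    pairG r1 r2 r3 r4 * t3 ^+ 2) = 0.
  have -> : 2 * 'i * (pairD r1 r2 r3 r4 * t4 ^+ 2 + 2 * pairE r1 r2 r3 r4 * t3 * t4 +
      pairG r1 r2 r3 r4 * t3 ^+ 2) = pairD r1 r2 r3 r4 * (2 * 'i * t4 ^+ 2) +
      pairE r1 r2 r3 r4 * (4 * 'i * t3 * t4) + pairG r1 r2 r3 r4 * (2 * 'i * t3 ^+ 2) by ring.
  rewrite -d0 -d1 -d2 eu1 eu2 ev1 ev2 /pairD /pairE /pairG; ring.
move/eqP: H; rewrite !mulf_eq0 (negbTE two_neq0) (negbTE (neq0Ci C)) /= => /eqP H.
have -> : pairF r1 r2 r3 r4 (t4 / t3) = (pairD r1 r2 r3 r4 * t4 ^+ 2 +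
    2 * pairE r1 r2 r3 r4 * t3 * t4 + pairG r1 r2 r3 r4 * t3 ^+ 2) / t3 ^+ 2.
  by rewrite /pairF; field.
by rewrite H mul0r.
Qed.

Lemma pairing_ratio_sym (r1 r2 r3 r4 u0 u1 u2 v0 v1 v2 t3 t4 : C) :
  pairD r1 r2 r3 r4 != 0 -> r1 != r2 -> r3 != r4 -> u0 * v0 != 0 ->
  u0 - v0 = 2 * 'i * t3 ^+ 2 -> u1 - v1 = 4 * 'i * t3 * t4 -> u2 - v2 = 2 * 'i * t4 ^+ 2 ->
  [&& quad u0 u1 u2 r1 == 0, quad u0 u1 u2 r2 == 0, quad v0 v1 v2 r3 == 0
    & quad v0 v1 v2 r4 == 0] ||
  [&& quad u0 u1 u2 r3 == 0, quad u0 u1 u2 r4 == 0, quad v0 v1 v2 r1 == 0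
    & quad v0 v1 v2 r2 == 0] ->
  t3 != 0 /\ pairF r1 r2 r3 r4 (t4 / t3) = 0.
Proof.
move=> nD n12 n34 nuv d0 d1 d2 /orP[h|h]; first exact: pairing_ratio h.
have nD' : pairD r3 r4 r1 r2 != 0 by rewrite /pairD -opprB oppr_eq0.
have [-> hF] := pairing_ratio nD' n34 n12 nuv d0 d1 d2 h.
by move/eqP: hF; rewrite pairF_swap oppr_eq0 => /eqP.
Qed.

(* The pairs {x1,x2} and {y1,y2} are harmonic (cross-ratio -1) iff this vanishes. *)
Definition harmonic (x1 x2 y1 y2 : C) := (x1 - y1) * (x2 - y2) + (x1 - y2) * (x2 - y1).

Lemma harmonic_distinct (x1 x2 y1 y2 : C) : harmonic x1 x2 y1 y2 = 0 ->
  x1 != x2 -> y1 != y2 -> [/\ x1 != y1, x1 != y2, x2 != y1 & x2 != y2].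
Proof.
have disj (u1 u2 v1 v2 : C) : harmonic u1 u2 v1 v2 = 0 -> u1 != u2 -> v1 != v2 -> u1 != v1.
  move=> h nu nv; apply/eqP => e; move: h; rewrite /harmonic e subrr mul0r add0r => /eqP.
  by rewrite mulf_eq0 !subr_eq0 => /orP[] /eqP e2; [move: nv | move: nu]; rewrite ?e e2 eqxx.
move=> h nx ny.
have nx' : x2 != x1 by rewrite eq_sym.
have ny' : y2 != y1 by rewrite eq_sym.
have sym1 : harmonic x1 x2 y2 y1 = 0 by rewrite -h /harmonic; ring.
have sym2 : harmonic x2 x1 y1 y2 = 0 by rewrite -h /harmonic; ring.
have sym3 : harmonic x2 x1 y2 y1 = 0 by rewrite -h /harmonic; ring.
by split; [exact: disj h nx ny | exact: disj sym1 nx ny' | exact: disj sym2 nx' ny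
          | exact: disj sym3 nx' ny'].
Qed.

Lemma harmonic_swapr (x1 x2 y1 y2 : C) : harmonic x1 x2 y2 y1 = harmonic x1 x2 y1 y2.
Proof. rewrite /harmonic; ring. Qed.

Lemma harmonic_uniq (x1 x2 y1 y2 z1 z2 : C) : x1 != x2 -> y1 != y2 -> z1 != z2 ->
  harmonic x1 x2 y1 y2 = 0 -> harmonic x1 x2 z1 z2 = 0 -> harmonic y1 y2 z1 z2 = 0 ->
  uniq [:: x1; x2; y1; y2; z1; z2].
Proof.
move=> nx ny nz hxy hxz hyz.
have [u11 u12 u21 u22] := harmonic_distinct hxy nx ny.
have [v11 v12 v21 v22] := harmonic_distinct hxz nx nz.
have [w11 w12 w21 w22] := harmonic_distinct hyz ny nz.
by rewrite /= !inE !negb_or nx u11 u12 v11 v12 u21 u22 v21 v22 ny w11 w12 w21 w22 nz.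
Qed.

Lemma harmonic_vieta (D1 E1 G1 D2 E2 G2 x1 x2 y1 y2 : C) : D1 != 0 -> D2 != 0 ->
  D1 * (x1 + x2) = - (2 * E1) -> D1 * (x1 * x2) = G1 ->
  D2 * (y1 + y2) = - (2 * E2) -> D2 * (y1 * y2) = G2 ->
  2 * E1 * E2 = G1 * D2 + G2 * D1 -> harmonic x1 x2 y1 y2 = 0.
Proof.
move=> n1 n2 s1 p1 s2 p2 h.
have : D1 * D2 * harmonic x1 x2 y1 y2 = 2 * (G1 * D2 + G2 * D1 - 2 * E1 * E2).
  have -> : D1 * D2 * harmonic x1 x2 y1 y2 = 2 * (D1 * (x1 * x2)) * D2 +
      2 * (D2 * (y1 * y2)) * D1 - (D1 * (x1 + x2)) * (D2 * (y1 + y2)) by rewrite /harmonic; ring.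
  by rewrite s1 p1 s2 p2; ring.
by rewrite h subrr mulr0 => /eqP; rewrite !mulf_eq0 (negbTE n1) (negbTE n2) => /eqP.
Qed.

Lemma pairings_apolar r1 r2 r3 r4 :
  [/\ 2 * pairE r1 r2 r3 r4 * pairE r1 r3 r2 r4 =
        pairG r1 r2 r3 r4 * pairD r1 r3 r2 r4 + pairG r1 r3 r2 r4 * pairD r1 r2 r3 r4,
      2 * pairE r1 r2 r3 r4 * pairE r1 r4 r2 r3 =
        pairG r1 r2 r3 r4 * pairD r1 r4 r2 r3 + pairG r1 r4 r2 r3 * pairD r1 r2 r3 r4
    & 2 * pairE r1 r3 r2 r4 * pairE r1 r4 r2 r3 =
        pairG r1 r3 r2 r4 * pairD r1 r4 r2 r3 + pairG r1 r4 r2 r3 * pairD r1 r3 r2 r4].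
Proof. rewrite /pairE /pairG /pairD; split; ring. Qed.

(* The Moebius coordinate sending x1 to 0 and x2 to infinity. *)
Definition hnorm (x1 x2 z : C) := (z - x1) / (x2 - z).

Lemma hnorm_harmonic (x1 x2 y1 y2 : C) : x2 != y1 -> x2 != y2 ->
  harmonic x1 x2 y1 y2 = 0 -> hnorm x1 x2 y2 = - hnorm x1 x2 y1.
Proof.
move=> n1 n2 h; rewrite -subr_eq0 in n1; rewrite -subr_eq0 in n2.
apply/eqP; rewrite -addr_eq0.
have : (hnorm x1 x2 y1 + hnorm x1 x2 y2) * ((x2 - y1) * (x2 - y2)) = - harmonic x1 x2 y1 y2.
  by rewrite /hnorm /harmonic; field; nonzero.
by rewrite h oppr0 => /eqP; rewrite mulf_eq0 mulf_eq0 (negbTE n1) (negbTE n2) !orbF addrC.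
Qed.

Lemma hnorm_harmonic_inv (x1 x2 y1 y2 z1 z2 : C) :
  x2 != y1 -> x2 != y2 -> x2 != z1 -> x2 != z2 ->
  harmonic (hnorm x1 x2 y1) (hnorm x1 x2 y2) (hnorm x1 x2 z1) (hnorm x1 x2 z2) =
  (x2 - x1) ^+ 2 * harmonic y1 y2 z1 z2 / ((x2 - y1) * (x2 - y2) * (x2 - z1) * (x2 - z2)).
Proof.
move=> n1 n2 n3 n4; rewrite -subr_eq0 in n1; rewrite -subr_eq0 in n2.
rewrite -subr_eq0 in n3; rewrite -subr_eq0 in n4.
by rewrite /hnorm /harmonic; field; nonzero.
Qed.

Definition mx2 (m00 m01 m10 m11 : C) : 'M[C]_2 :=
  \matrix_(i, j) (if i == 0 then (if j == 0 then m00 else m01)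
                  else (if j == 0 then m10 else m11)).

Lemma mobius_point (x1 x2 k c z : C) : x2 != z -> hnorm x1 x2 z = c * k ->
  proj_eq (1, z) (mob_act (mx2 1 k x1 (k * x2)) (1, c)).
Proof.
move=> nz h; have e : z - x1 = c * k * (x2 - z) by rewrite -h divfK // subr_eq0.
rewrite /proj_eq /mob_act /mx2 !mxE /=.
by apply/eqP; rewrite -subr_eq0 -(subrr (z - x1)) {1}e; apply/eqP; ring.
Qed.

Lemma octahedral (x1 x2 y1 y2 z1 z2 : C) : x1 != x2 -> y1 != y2 -> z1 != z2 ->
  harmonic x1 x2 y1 y2 = 0 -> harmonic x1 x2 z1 z2 = 0 -> harmonic y1 y2 z1 z2 = 0 ->
  exists w4 w5, ((w4 = z1 /\ w5 = z2) \/ (w4 = z2 /\ w5 = z1)) /\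
  exists M : 'M[C]_2, \det M != 0 /\
    forall j : 'I_6, proj_eq (1, nth 0 [:: x1; x2; y1; y2; w4; w5] j) (mob_act M (six_pts C j)).
Proof.
move=> nx ny nz hxy hxz hyz.
have [ny1 _ dy1 dy2] := harmonic_distinct hxy nx ny.
have [_ _ dz1 dz2] := harmonic_distinct hxz nx nz.
set k := hnorm x1 x2 y1.
have nk : k != 0 by apply: mulf_neq0; rewrite ?invr_eq0 subr_eq0 // eq_sym.
have ky2 : hnorm x1 x2 y2 = - k := hnorm_harmonic dy1 dy2 hxy.
have wz2 : hnorm x1 x2 z2 = - hnorm x1 x2 z1 := hnorm_harmonic dz1 dz2 hxz.
have hw : hnorm x1 x2 z1 = 'i * k \/ hnorm x1 x2 z1 = - ('i * k).
  have := hnorm_harmonic_inv x1 dy1 dy2 dz1 dz2.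
  rewrite hyz mulr0 mul0r ky2 wz2 -/k /harmonic => /eqP.
  set w := hnorm x1 x2 z1.
  have -> : (k - w) * (- k - - w) + (k - - w) * (- k - w) = - 2 * (w ^+ 2 - ('i * k) ^+ 2).
    by rewrite [('i * k) ^+ 2]exprMn sqrCi; ring.
  rewrite mulf_eq0 oppr_eq0 (negbTE two_neq0) subr_eq0 eqf_sqr /=.
  by case/orP=> /eqP ->; [left|right].
have Moct (w4 w5 : C) : x2 != w4 -> hnorm x1 x2 w4 = 'i * k ->
    x2 != w5 -> hnorm x1 x2 w5 = - 'i * k ->
    exists M : 'M[C]_2, \det M != 0 /\ forall j : 'I_6,
      proj_eq (1, nth 0 [:: x1; x2; y1; y2; w4; w5] j) (mob_act M (six_pts C j)).
  move=> n4 h4 n5 h5; exists (mx2 1 k x1 (k * x2)); split.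
    by rewrite det2 /mx2 !mxE /= mul1r -mulrBr mulf_neq0 // subr_eq0 eq_sym.
  have Mpt := @mobius_point x1 x2 k.
  case=> [[|[|[|[|[|[|?]]]]]] ?] //=.
  - by apply: Mpt; rewrite 1?eq_sym // /hnorm subrr !mul0r.
  - by rewrite /proj_eq /mob_act /mx2 !mxE /=; ring.
  - by apply: Mpt; rewrite ?mul1r.
  - by apply: Mpt; rewrite ?ky2 ?mulN1r.
  - exact: Mpt.
  - exact: Mpt.
case: hw => hw; [exists z1, z2 | exists z2, z1];
  (split; [by [left | right] | apply: Moct]); by rewrite // ?wz2 hw ?mulNr ?opprK.
Qed.

(* The representation of a quartic with distinct roots attached to a root tau of
   the quadratic of the pairing {r1,r2} | {r3,r4}; moreover p(-tau, 1) != 0,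
   since by [pairF_at_roots] no -r_i is a root of F. *)
Lemma pair_rep_facts (a : 'I_5 -> C) a0 r1 r2 r3 r4 tau :
  a0 != 0 -> pairD r1 r2 r3 r4 != 0 -> r1 != r2 -> r1 != r3 -> r1 != r4 -> r2 != r3 ->
  r2 != r4 -> r3 != r4 ->
  (forall x y, qeval a x y = a0 * (x - r1 * y) * (x - r2 * y) * (x - r3 * y) * (x - r4 * y)) ->
  pairF r1 r2 r3 r4 tau = 0 ->
  [/\ represents a (pair_rep a0 r1 r2 r3 r4 tau), (pair_rep a0 r1 r2 r3 r4 tau)@@3 != 0,
      (pair_rep a0 r1 r2 r3 r4 tau)@@4 = tau * (pair_rep a0 r1 r2 r3 r4 tau)@@3
    & qeval a (- tau) 1 != 0].
Proof.
move=> na0 nD n12 n13 n14 n23 n24 n34 ha hF.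
have [F n3 e4] := pair_rep_spec na0 nD n12 n34 hF.
split => //; first by move=> x y; rewrite ha F.
have [f1 f2 f3 f4] := pairF_at_roots r1 r2 r3 r4.
have notroot r : pairF r1 r2 r3 r4 (- r) != 0 -> - tau - r * 1 != 0.
  by apply: contraNneq => /eqP; rewrite mulr1 subr_eq0 => /eqP <-; rewrite opprK hF.
have d (x y : C) : x != y -> x - y != 0 by rewrite subr_eq0.
rewrite ha !mulf_neq0 //; apply: notroot.
- by rewrite f1 !mulf_neq0 ?d.
- by rewrite f2 !mulf_neq0 ?d // eq_sym.
- by rewrite f3 oppr_eq0 !mulf_neq0 ?d // eq_sym.
- by rewrite f4 oppr_eq0 !mulf_neq0 ?d // eq_sym.
Qed.

Definition six_reps_octahedral (a : 'I_5 -> C) : Prop :=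
  exists r : 'I_6 -> 'I_5 -> C,
    (forall k, represents a (r k)) /\
    (forall k l, k != l -> ~ same_rep (r k) (r l)) /\
    (forall t, represents a t -> exists k, same_rep t (r k)) /\
    (forall k, (r k (inord 3), r k (inord 4)) != (0, 0)) /\
    exists M : 'M[C]_2, \det M != 0 /\
      (forall k, exists j, proj_eq (r k (inord 3), r k (inord 4)) (mob_act M (six_pts C j))) /\
      (forall j, exists k, proj_eq (r k (inord 3), r k (inord 4)) (mob_act M (six_pts C j))).

Section SixRepresentations.
Variables (a : 'I_5 -> C) (a0 r1 r2 r3 r4 : C).
Hypotheses (na0 : a0 != 0) (n12 : r1 != r2) (n13 : r1 != r3) (n14 : r1 != r4)
  (n23 : r2 != r3) (n24 : r2 != r4) (n34 : r3 != r4).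
Hypotheses (nDA : pairD r1 r2 r3 r4 != 0) (nDB : pairD r1 r3 r2 r4 != 0)
  (nDC : pairD r1 r4 r2 r3 != 0).
Hypothesis ha :
  forall x y, qeval a x y = a0 * (x - r1 * y) * (x - r2 * y) * (x - r3 * y) * (x - r4 * y).

Let tA1 := tau1 r1 r2 r3 r4.
Let tA2 := tau2 r1 r2 r3 r4.
Let tB1 := tau1 r1 r3 r2 r4.
Let tB2 := tau2 r1 r3 r2 r4.
Let tC1 := tau1 r1 r4 r2 r3.
Let tC2 := tau2 r1 r4 r2 r3.

Let distA : (r1 - r3) * (r1 - r4) * (r2 - r3) * (r2 - r4) != 0.
Proof. by rewrite !mulf_neq0 // subr_eq0. Qed.
Let distB : (r1 - r2) * (r1 - r4) * (r3 - r2) * (r3 - r4) != 0.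
Proof. by rewrite !mulf_neq0 // subr_eq0 // eq_sym. Qed.
Let distC : (r1 - r2) * (r1 - r3) * (r4 - r2) * (r4 - r3) != 0.
Proof. by rewrite !mulf_neq0 // subr_eq0 // eq_sym. Qed.

Lemma pairing_roots_harmonic :
  [/\ [/\ tA1 != tA2, tB1 != tB2 & tC1 != tC2],
      harmonic tA1 tA2 tB1 tB2 = 0, harmonic tA1 tA2 tC1 tC2 = 0
    & harmonic tB1 tB2 tC1 tC2 = 0].
Proof.
have [_ _ nA sA pA] := pairF_roots nDA distA.
have [_ _ nB sB pB] := pairF_roots nDB distB.
have [_ _ nC sC pC] := pairF_roots nDC distC.
have [iAB iAC iBC] := pairings_apolar r1 r2 r3 r4.
split => //; [exact: harmonic_vieta nDA nDB sA pA sB pB iAB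
  | exact: harmonic_vieta nDA nDC sA pA sC pC iAC | exact: harmonic_vieta nDB nDC sB pB sC pC iBC].
Qed.

Lemma pairing_root_cases tau :
  [\/ pairF r1 r2 r3 r4 tau = 0, pairF r1 r3 r2 r4 tau = 0 | pairF r1 r4 r2 r3 tau = 0] ->
  [\/ tau = tA1 \/ tau = tA2, tau = tB1 \/ tau = tB2 | tau = tC1 \/ tau = tC2].
Proof.
have root2 r1' r2' r3' r4' : pairD r1' r2' r3' r4' != 0 -> pairF r1' r2' r3' r4' tau = 0 ->
    tau = tau1 r1' r2' r3' r4' \/ tau = tau2 r1' r2' r3' r4'.
  move=> nD; rewrite pairF_factor // => /eqP.
  by rewrite !mulf_eq0 (negbTE nD) !subr_eq0 => /orP[] /eqP; [left|right].
by case=> h; [apply: Or31 | apply: Or32 | apply: Or33]; apply: root2.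
Qed.

(* Indeed p = U V with U, V = q +- i l^2, so U and V share out the
   four roots two by two, and [pairing_ratio_sym] applies. *)
Lemma rep_ratio_pairing (t : 'I_5 -> C) : represents a t ->
  t@@3 != 0 /\ [\/ pairF r1 r2 r3 r4 (t@@4 / t@@3) = 0, pairF r1 r3 r2 r4 (t@@4 / t@@3) = 0
                 | pairF r1 r4 r2 r3 (t@@4 / t@@3) = 0].
Proof.
move=> Ht; have [e0 e1 e2 e3 e4] := represents_coef Ht.
set u0 := t@@0 + 'i * t@@3 ^+ 2; set u1 := t@@1 + 2 * 'i * t@@3 * t@@4;
set u2 := t@@2 + 'i * t@@4 ^+ 2; set v0 := t@@0 - 'i * t@@3 ^+ 2;
set v1 := t@@1 - 2 * 'i * t@@3 * t@@4; set v2 := t@@2 - 'i * t@@4 ^+ 2.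
have qfactor (q l : C) : (q + 'i * l ^+ 2) * (q - 'i * l ^+ 2) = q ^+ 2 + l ^+ 4.
  rewrite (_ : _ * _ = q ^+ 2 - 'i ^+ 2 * l ^+ 4); last by ring.
  by rewrite sqrCi; ring.
have UV z : quad u0 u1 u2 z * quad v0 v1 v2 z = a0 * (z - r1) * (z - r2) * (z - r3) * (z - r4).
  have := ha z 1; rewrite !mulr1 => <-; rewrite qevalE e0 e1 e2 e3 e4.
  have -> : quad u0 u1 u2 z = quad t@@0 t@@1 t@@2 z + 'i * (t@@3 * z + t@@4) ^+ 2.
    by rewrite /quad /u0 /u1 /u2; ring.
  have -> : quad v0 v1 v2 z = quad t@@0 t@@1 t@@2 z - 'i * (t@@3 * z + t@@4) ^+ 2.
    by rewrite /quad /v0 /v1 /v2; ring.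
  by rewrite qfactor /quad; ring.
have uv0 : u0 * v0 != 0.
  have <- : qeval a 1 0 = u0 * v0 by rewrite qevalE e0 /u0 /v0 qfactor; ring.
  by rewrite ha !mulr0 !subr0 !mulr1.
have [nu0 nv0] : u0 != 0 /\ v0 != 0 by apply/andP; rewrite -negb_or -mulf_eq0.
have dd0 : u0 - v0 = 2 * 'i * t@@3 ^+ 2 by rewrite /u0 /v0; ring.
have dd1 : u1 - v1 = 4 * 'i * t@@3 * t@@4 by rewrite /u1 /v1; ring.
have dd2 : u2 - v2 = 2 * 'i * t@@4 ^+ 2 by rewrite /u2 /v2; ring.
have root r : a0 * (r - r1) * (r - r2) * (r - r3) * (r - r4) = 0 ->
    (quad u0 u1 u2 r == 0) || (quad v0 v1 v2 r == 0) by rewrite -UV => /eqP; rewrite mulf_eq0.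
move: (root r1) (root r2) (root r3) (root r4); rewrite !subrr !(mulr0, mul0r).
move=> /(_ erefl) h1 /(_ erefl) h2 /(_ erefl) h3 /(_ erefl) h4.
case: (@two_two_split (fun z => quad u0 u1 u2 z == 0) (fun z => quad v0 v1 v2 z == 0)
  r1 r2 r3 r4 (fun x y z hx hy hz => quad_three_roots nu0 (eqP hx) (eqP hy) (eqP hz))
  (fun x y z hx hy hz => quad_three_roots nv0 (eqP hx) (eqP hy) (eqP hz))
  n12 n13 n14 n23 n24 n34 h1 h2 h3 h4) => h.
- by have [-> hF] := pairing_ratio_sym nDA n12 n34 uv0 dd0 dd1 dd2 h; split=> //; apply: Or31.
- by have [-> hF] := pairing_ratio_sym nDB n13 n24 uv0 dd0 dd1 dd2 h; split=> //; apply: Or32.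
- by have [-> hF] := pairing_ratio_sym nDC n14 n23 uv0 dd0 dd1 dd2 h; split=> //; apply: Or33.
Qed.

(* The six representations, indexed so that the ratio of the k-th one is the k-th
   entry of [ratios]; w4, w5 are the roots of the third pairing in the order in
   which the Moebius normal form will meet them. *)
Section Indexing.
Variables (w4 w5 : C).
Hypothesis hw : (w4 = tC1 /\ w5 = tC2) \/ (w4 = tC2 /\ w5 = tC1).

Definition ratios : seq C := [:: tA1; tA2; tB1; tB2; w4; w5].

Definition rep (k : 'I_6) : 'I_5 -> C :=
  if (k < 2)%N then pair_rep a0 r1 r2 r3 r4 (nth 0 ratios k)
  else if (k < 4)%N then pair_rep a0 r1 r3 r2 r4 (nth 0 ratios k)
  else pair_rep a0 r1 r4 r2 r3 (nth 0 ratios k).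

Lemma rep_spec (k : 'I_6) :
  [/\ represents a (rep k), (rep k)@@3 != 0,
      (rep k)@@4 = nth 0 ratios k * (rep k)@@3 & qeval a (- nth 0 ratios k) 1 != 0].
Proof.
have hB x y : qeval a x y = a0 * (x - r1 * y) * (x - r3 * y) * (x - r2 * y) * (x - r4 * y).
  by rewrite ha; ring.
have hC x y : qeval a x y = a0 * (x - r1 * y) * (x - r4 * y) * (x - r2 * y) * (x - r3 * y).
  by rewrite ha; ring.
have [FA1 FA2 _ _ _] := pairF_roots nDA distA.
have [FB1 FB2 _ _ _] := pairF_roots nDB distB.
have [FC1 FC2 _ _ _] := pairF_roots nDC distC.
have [FC4 FC5] : pairF r1 r4 r2 r3 w4 = 0 /\ pairF r1 r4 r2 r3 w5 = 0.
  by case: hw => -[-> ->].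
have n32 : r3 != r2 by rewrite eq_sym.
have n42 : r4 != r2 by rewrite eq_sym.
have n43 : r4 != r3 by rewrite eq_sym.
case: k => [[|[|[|[|[|[|?]]]]]] ?] //; rewrite /rep /=.
- exact: pair_rep_facts na0 nDA n12 n13 n14 n23 n24 n34 ha FA1.
- exact: pair_rep_facts na0 nDA n12 n13 n14 n23 n24 n34 ha FA2.
- exact: pair_rep_facts na0 nDB n13 n12 n14 n32 n34 n24 hB FB1.
- exact: pair_rep_facts na0 nDB n13 n12 n14 n32 n34 n24 hB FB2.
- exact: pair_rep_facts na0 nDC n14 n12 n13 n42 n43 n23 hC FC4.
- exact: pair_rep_facts na0 nDC n14 n12 n13 n42 n43 n23 hC FC5.
Qed.

(* The six ratios are distinct: the pairs are distinct and harmonic to each other. *)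
Lemma ratios_uniq : uniq ratios.
Proof.
have [[nA nB nC] hAB hAC hBC] := pairing_roots_harmonic.
rewrite /ratios; case: hw => -[-> ->]; first exact: harmonic_uniq.
by apply: harmonic_uniq; rewrite // 1?eq_sym // harmonic_swapr.
Qed.

Lemma rep_complete (t : 'I_5 -> C) : represents a t -> exists k, same_rep t (rep k).
Proof.
move=> Ht; have [nz3 hF] := rep_ratio_pairing Ht.
have mem : t@@4 / t@@3 \in ratios.
  rewrite /ratios !inE.
  by case: (pairing_root_cases hF) => -[] ->; case: hw => -[-> ->]; rewrite eqxx ?orbT.
pose k := Ordinal (etrans (index_mem _ _) mem : (index (t@@4 / t@@3) ratios < 6)%N).
exists k; have [Rk _ ek pk] := rep_spec k.
have ek' : nth 0 ratios k = t@@4 / t@@3 by rewrite nth_index.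
by apply: (rep_unique Ht Rk nz3 _ ek pk); rewrite ek' divfK.
Qed.

Lemma rep_distinct (k l : 'I_6) : k != l -> ~ same_rep (rep k) (rep l).
Proof.
move=> nkl [eps [zeta [_ [_ [_ [_ [_ [h3 h4]]]]]]]].
have [_ z1 e1 _] := rep_spec k; have [_ z2 e2 _] := rep_spec l.
move/negP: nkl; apply; apply/eqP/val_inj/eqP.
rewrite -(nth_uniq 0 _ _ ratios_uniq) ?ltn_ord //; apply/eqP/(mulIf z2).
by rewrite -e2 h4 e1 h3; ring.
Qed.

End Indexing.

Lemma six_representations : six_reps_octahedral a.
Proof.
have [[nA nB nC] hAB hAC hBC] := pairing_roots_harmonic.
have [w4 [w5 [hw [M [detM hM]]]]] := octahedral nA nB nC hAB hAC hBC.
have proj_scale (s tau : C) P : s != 0 -> proj_eq (1, tau) P -> proj_eq (s, tau * s) P.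
  by rewrite /proj_eq /= => _; rewrite mul1r => ->; ring.
have proj_rep k : proj_eq ((rep w4 w5 k)@@3, (rep w4 w5 k)@@4) (mob_act M (six_pts C k)).
  by have [_ nz e _] := rep_spec hw k; rewrite e; exact: proj_scale (hM k).
exists (rep w4 w5); split; first by move=> k; case: (rep_spec hw k).
split; first exact: rep_distinct hw.
split; first exact: rep_complete hw.
split; first by move=> k; have [_ nz _ _] := rep_spec hw k; rewrite xpair_eqE negb_and nz.
by exists M; split=> //; split=> k; exists k; apply: proj_rep.
Qed.

End SixRepresentations.

Definition root_coefs (a0 r1 r2 r3 r4 : C) : 'I_5 -> C :=
  mk5 a0 (- a0 * (r1 + r2 + r3 + r4))
      (a0 * (r1 * r2 + r1 * r3 + r1 * r4 + r2 * r3 + r2 * r4 + r3 * r4))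
      (- a0 * (r1 * r2 * r3 + r1 * r2 * r4 + r1 * r3 * r4 + r2 * r3 * r4))
      (a0 * (r1 * r2 * r3 * r4)).

Lemma quartic_roots (a : 'I_5 -> C) : a@@0 != 0 -> exists r1 r2 r3 r4 : C,
  forall i : 'I_5, a i = root_coefs a@@0 r1 r2 r3 r4 i.
Proof.
move=> na0.
have [r1 [r2 [r3 [r4 hz]]]] :=
  monic_quartic_split (a@@1 / a@@0) (a@@2 / a@@0) (a@@3 / a@@0) (a@@4 / a@@0).
have [] := @quartic_fun_eq0 0 (a@@1 / a@@0 + (r1 + r2 + r3 + r4))
   (a@@2 / a@@0 - (r1 * r2 + r1 * r3 + r1 * r4 + r2 * r3 + r2 * r4 + r3 * r4))
   (a@@3 / a@@0 + (r1 * r2 * r3 + r1 * r2 * r4 + r1 * r3 * r4 + r2 * r3 * r4))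
   (a@@4 / a@@0 - r1 * r2 * r3 * r4).
  move=> z; rewrite -[RHS](subrr ((z - r1) * (z - r2) * (z - r3) * (z - r4))) -{1}hz; ring.
move=> _ c1 c2 c3 c4.
have scale (c X : C) : c / a@@0 - X = 0 -> c = a@@0 * X.
  by move/subr0_eq <-; rewrite mulrC divfK.
exists r1, r2, r3, r4 => i; rewrite -[i]inord_val /root_coefs /mk5 inordK //=.
case: i => [[|[|[|[|[|?]]]]] ?] //=.
- by rewrite mulNr -mulrN; apply: scale; rewrite opprK.
- exact: scale.
- by rewrite mulNr -mulrN; apply: scale; rewrite opprK.
- exact: scale.
Qed.

Lemma discriminant_roots (a0 r1 r2 r3 r4 : C) :
  let c := root_coefs a0 r1 r2 r3 r4 in
  4 * invI a0 c@@1 c@@2 c@@3 c@@4 ^+ 3 - invJ a0 c@@1 c@@2 c@@3 c@@4 ^+ 2 =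
  27 * a0 ^+ 6 * ((r1 - r2) * (r1 - r3) * (r1 - r4) * (r2 - r3) * (r2 - r4) * (r3 - r4)) ^+ 2.
Proof. by rewrite /root_coefs /mk5 !inordK //= /invI /invJ; ring. Qed.

Lemma invR_roots (a0 r1 r2 r3 r4 : C) :
  let c := root_coefs a0 r1 r2 r3 r4 in
  invR a0 c@@1 c@@2 c@@3 = a0 ^+ 3 * (pairD r1 r2 r3 r4 * pairD r1 r3 r2 r4 * pairD r1 r4 r2 r3).
Proof. by rewrite /root_coefs /mk5 !inordK //= /invR /pairD; ring. Qed.

Lemma generic_six_representations (a : 'I_5 -> C) :
  genericity a@@0 a@@1 a@@2 a@@3 a@@4 != 0 -> six_reps_octahedral a.
Proof.
rewrite /genericity !mulf_eq0 !negb_or => /andP[/andP[na0 nI] nR].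
have [r1 [r2 [r3 [r4 har]]]] := quartic_roots na0.
set a0 := a@@0 in har na0 nI nR.
rewrite !har discriminant_roots in nI; rewrite !har invR_roots in nR.
have : (r1 - r2) * (r1 - r3) * (r1 - r4) * (r2 - r3) * (r2 - r4) * (r3 - r4) != 0.
  by apply: contraNneq nI => ->; rewrite expr0n mulr0.
rewrite !mulf_eq0 !negb_or !subr_eq0.
case/andP=> /andP[/andP[/andP[/andP[n12 n13] n14] n23] n24] n34.
have : pairD r1 r2 r3 r4 * pairD r1 r3 r2 r4 * pairD r1 r4 r2 r3 != 0.
  by apply: contraNneq nR => ->; rewrite mulr0.
rewrite !mulf_eq0 !negb_or => /andP[/andP[nDA nDB] nDC].
apply: (six_representations na0 n12 n13 n14 n23 n24 n34 nDA nDB nDC) => x y.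
by rewrite qevalE !har /root_coefs /mk5 !inordK //=; ring.
Qed.

Definition genericity_poly : poly5 C :=
  genericity 'X%:P%:P%:P%:P 'X%:P%:P%:P 'X%:P%:P 'X%:P 'X.

Lemma eval_genericity_poly (a : 'I_5 -> C) :
  eval5 genericity_poly a = genericity a@@0 a@@1 a@@2 a@@3 a@@4.
Proof.
rewrite /eval5 -!horner_evalE !rmorph_genericity.
by congr genericity; rewrite /= /horner_eval !(hornerC, hornerX).
Qed.

(* It is a nonzero polynomial: it does not vanish at x (x - y)(x - 2y)(x - 4y). *)
Lemma genericity_poly_neq0 : genericity_poly != 0.
Proof.
apply/eqP => h0.
have := eval_genericity_poly (root_coefs 1 0%:R 1%:R 2%:R 4%:R).
rewrite h0 /eval5 !horner0 => /esym/eqP; apply/negP.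
have -> : (root_coefs 1 0%:R 1%:R 2%:R 4%:R)@@0 = 1 by rewrite /root_coefs /mk5 inordK.
rewrite /genericity discriminant_roots invR_roots /pairD -!natrD !expr1n !mul1r.
have nat_neq (m n : nat) : m != n -> (m%:R - n%:R : C) != 0 by rewrite subr_eq0 eqr_nat.
by rewrite !mulf_neq0 ?expf_neq0 ?mulf_neq0 ?nat_neq ?pnatr_eq0 ?oner_neq0.
Qed.
End BinaryQuartics.

Unset Implicit Arguments.

Theorem theorem4p6 (C : numClosedFieldType) :
  general (fun a : 'I_5 -> C =>
    exists r : 'I_6 -> 'I_5 -> C,
      (* six representations *)
      (forall k, represents a (r k)) /\
      (* pairwise different *)
      (forall k l, k != l -> ~ same_rep (r k) (r l)) /\
      (* and no others *)
      (forall t, represents a t -> exists k, same_rep t (r k)) /\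
      (* the ratios t5/t4 are well defined points of P^1 ... *)
      (forall k, (r k (inord 3), r k (inord 4)) != (0, 0)) /\
      (* ... and form the Moebius image of {0, oo, 1, -1, i, -i} *)
      exists M : 'M[C]_2, \det M != 0 /\
        (forall k, exists j, proj_eq (r k (inord 3), r k (inord 4)) (mob_act M (six_pts C j))) /\
        (forall j, exists k, proj_eq (r k (inord 3), r k (inord 4)) (mob_act M (six_pts C j)))).
Proof.
exists (genericity_poly C); split; first exact: genericity_poly_neq0.
move=> a; rewrite eval_genericity_poly.
exact: generic_six_representations.
Qed.
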